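(* Let $a\in \mathcal{A}$ and $k\in \mathbb{N}$. Then the following are equivalent: (1) $a\in \mathcal{A}^{\mathrm{gcEP}}$; (2) $a^k\in \mathcal{A}^{\mathrm{gcEP}}$. In this case, $(a^k)^{\mathrm{gcEP}}=(a^{\mathrm{gcEP}})^k$ and $a^{\mathrm{gcEP}}=a^{k-1}(a^k)^{\mathrm{gcEP}}$.
   Context: $\mathcal{A}$ is a complex Banach *-algebra with identity. An element $a$ has a generalized core-EP inverse if there is $x\in\mathcal{A}$ with $x=ax^2$, $(ax)^*=ax$, $\lim_{n\to\infty}\|a^n-xa^{n+1}\|^{1/n}=0$; such $x$ is unique, denoted $a^{\mathrm{gcEP}}$, and $\mathcal{A}^{\mathrm{gcEP}}$ is the set of such $a$. *)

From HB Require Import structures.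
From mathcomp Require Import all_boot all_order all_algebra.
From mathcomp Require Import all_classical all_reals all_analysis.
From mathcomp Require Import complex.
Set Implicit Arguments. Unset Strict Implicit. Unset Printing Implicit Defensive.
Import Order.TTheory GRing.Theory Num.Theory numFieldNormedType.Exports.
Local Open Scope ring_scope.
Local Open Scope complex_scope.
Local Open Scope classical_set_scope.
Local Open Scope ring_scope.

Definition cmod (R : realType) (c : R[i]) : R := Num.sqrt ((complex.Re c) ^+ 2 + (complex.Im c) ^+ 2).
Definition cconj (R : realType) (c : R[i]) : R[i] := complex.Complex (complex.Re c) (- complex.Im c).

Record banach_star_algebra (R : realType) (A : algType R[i])
    (star : A -> A) (nrm : A -> R) : Prop := BanachStarAlgebra {
  nrm_ge0 : forall x, 0 <= nrm x;
  nrm_eq0 : forall x, nrm x = 0 -> x = 0;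
  nrm_triangle : forall x y, nrm (x + y) <= nrm x + nrm y;
  nrm_scale : forall (c : R[i]) x, nrm (c *: x) = cmod c * nrm x;
  nrm_submult : forall x y, nrm (x * y) <= nrm x * nrm y;
  nrm_complete : forall u : nat -> A,
    (forall e : R, 0 < e -> exists N, forall m n, (N <= m)%N -> (N <= n)%N ->
       nrm (u m - u n) < e) ->
    exists l : A, forall e : R, 0 < e -> exists N, forall n, (N <= n)%N ->
       nrm (u n - l) < e;
  star_add : forall x y, star (x + y) = star x + star y;
  star_scale : forall (c : R[i]) x, star (c *: x) = cconj c *: star x;
  star_mul : forall x y, star (x * y) = star y * star x;
  star_invol : forall x, star (star x) = x
}.

Definition is_gcEP_inv (R : realType) (A : algType R[i])
    (star : A -> A) (nrm : A -> R) (a x : A) : Prop :=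
  [/\ x = a * x ^+ 2,
      star (a * x) = a * x &
      (fun n : nat => powR (nrm (a ^+ n - x * a ^+ n.+1)) (n%:R)^-1) @ \oo --> (0 : R)].

Definition has_gcEP (R : realType) (A : algType R[i])
    (star : A -> A) (nrm : A -> R) (a : A) : Prop :=
  exists x, is_gcEP_inv star nrm a x.

From HB Require Import structures.
From mathcomp Require Import all_boot all_order all_algebra.
From mathcomp Require Import all_classical all_reals all_analysis.
From mathcomp Require Import complex.
Set Implicit Arguments. Unset Strict Implicit. Unset Printing Implicit Defensive.
Import Order.TTheory GRing.Theory Num.Theory numFieldNormedType.Exports.
Local Open Scope classical_set_scope.
Local Open Scope ring_scope.

(* Write d_n(a, x) := a^n - x a^(n+1).  The condition ||d_n||^(1/n) -> 0 says
   that ||d_n|| = O(r^n) for every r > 0, so any fixed element that factors as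
   u d_n w v^n is 0.  For z = a z^2 one has z - x a z = d_n z^(n+1), hence
   x a z = z; with the self-adjointness of a x this gives uniqueness.  The
   defects of x^k with respect to a^k telescope into k defects of x, so x^k is
   the inverse of a^k.  Conversely, if y is the inverse of a^k, the defects of
   a^(k-1) y along the indices k m + k - 1 are a^(k-1) times those of y, and
   d_(n+1) = d_n a controls the remaining indices. *)

Section SuperexpDecay.
Variable R : realFieldType.
Implicit Types (u v : nat -> R) (r K L : R).

Definition superexp_decay u :=
  forall r, 0 < r -> exists M N, forall n, (N <= n)%N -> u n <= M * r ^+ n.

Lemma superexp_decay_le u v :
  (forall n, u n <= v n) -> superexp_decay v -> superexp_decay u.
Proof.
move=> uv dv r r0; have [M [N HN]] := dv r r0.
by exists M, N => n Nn; apply: le_trans (uv n) (HN n Nn).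
Qed.

Lemma superexp_decayMl K u :
  0 <= K -> superexp_decay u -> superexp_decay (fun n => K * u n).
Proof.
move=> K0 du r r0; have [M [N HN]] := du r r0.
by exists (K * M), N => n Nn; rewrite -mulrA ler_wpM2l ?HN.
Qed.

Lemma superexp_decayD u v :
  superexp_decay u -> superexp_decay v -> superexp_decay (fun n => u n + v n).
Proof.
move=> du dv r r0; have [M [N HN]] := du r r0; have [M' [N' HN']] := dv r r0.
exists (M + M'), (maxn N N') => n; rewrite geq_max => /andP[Nn N'n].
by rewrite mulrDl lerD ?HN ?HN'.
Qed.

Lemma superexp_decay_from_le1 u :
  (forall r, 0 < r -> r <= 1 -> exists M N, forall n, (N <= n)%N -> u n <= M * r ^+ n) ->
  superexp_decay u.
Proof.
move=> du r r0; set s := Num.min r 1.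
have s0 : 0 < s by rewrite lt_min r0 ltr01.
have [M [N HN]] := du s s0 ltac:(by rewrite ge_min lexx orbT).
exists `|M|, N => n Nn; apply: (le_trans (HN n Nn)).
apply: le_trans (ler_wpM2r (exprn_ge0 _ (ltW s0)) (ler_norm M)) _.
by rewrite ler_wpM2l // lerXn2r ?nnegrE ?(ltW s0) ?(ltW r0) // ge_min lexx.
Qed.

Lemma superexp_decay_shift u j :
  superexp_decay (fun n => u (n + j)%N) <-> superexp_decay u.
Proof.
split=> du r r0; have [M [N HN]] := du r r0.
- exists (M / r ^+ j), (N + j)%N => n Nn.
  have jn : (j <= n)%N by apply: leq_trans Nn; apply: leq_addl.
  have := HN (n - j)%N; rewrite subnK // leq_subRL // addnC => /(_ Nn) /le_trans; apply.
  by rewrite -[in r ^+ n](subnK jn) addnC exprD mulrA divfK // expf_neq0 ?gt_eqF.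
- exists (M * r ^+ j), N => n Nn.
  by rewrite -mulrA -exprD addnC HN // (leq_trans Nn) ?leq_addl.
Qed.

Lemma superexp_decayMgeom L u :
  0 <= L -> superexp_decay u -> superexp_decay (fun n => u n * L ^+ n).
Proof.
move=> L0 du r r0; have L1 : 0 < L + 1 by rewrite ltr_wpDl.
have [M [N HN]] := du (r / (L + 1)) (divr_gt0 r0 L1).
have q0 : 0 <= L / (L + 1) := divr_ge0 L0 (ltW L1).
have q1 : L / (L + 1) <= 1 by rewrite ler_pdivrMr // mul1r lerDl.
exists `|M|, N => n Nn.
apply: le_trans (ler_wpM2r (exprn_ge0 _ L0) (HN n Nn)) _.
rewrite -mulrA -exprMn mulrAC -mulrA exprMn mulrA.
apply: le_trans (ler_wpM2r (exprn_ge0 _ q0) (ler_wpM2r (exprn_ge0 _ (ltW r0)) (ler_norm M))) _.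
by apply: ler_piMr; [rewrite mulr_ge0 ?normr_ge0 ?exprn_ge0 ?ltW | exact: exprn_ile1].
Qed.

Lemma superexp_decay_subseq k u :
  (0 < k)%N -> superexp_decay u -> superexp_decay (fun n => u (k * n)%N).
Proof.
move=> k0 du; apply: superexp_decay_from_le1 => r r0 r1.
have [M [N HN]] := du r r0.
exists `|M|, N => n Nn; have kn : (n <= k * n)%N by rewrite leq_pmull.
apply: le_trans (HN _ (leq_trans Nn kn)) _.
apply: le_trans (ler_wpM2r (exprn_ge0 _ (ltW r0)) (ler_norm M)) _.
by rewrite ler_wpM2l ?normr_ge0 // ler_wiXn2l // ltW.
Qed.

Lemma geom_growth_le L u : 0 <= L -> (forall n, u n.+1 <= L * u n) ->
  forall n j, u (n + j)%N <= L ^+ j * u n.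
Proof.
move=> L0 uL n; elim=> [|j IHj]; first by rewrite addn0 mul1r.
by rewrite addnS exprS -mulrA (le_trans (uL _)) // ler_wpM2l.
Qed.

Lemma superexp_decay_from_subseq k L u :
  (0 < k)%N -> 0 <= L -> (forall n, 0 <= u n) -> (forall n, u n.+1 <= L * u n) ->
  superexp_decay (fun n => u (k * n)%N) -> superexp_decay u.
Proof.
move=> k0 L0 u0 uL du; apply: superexp_decay_from_le1 => r r0 r1.
have [M [N HN]] := du (r ^+ k) (exprn_gt0 _ r0).
exists ((L + 1) ^+ k * `|M| / r ^+ k), (k * N)%N => n Nn.
have Nq : (N <= n %/ k)%N by rewrite leq_divRL // mulnC.
have ik : (n %% k < k)%N by rewrite ltn_mod.
have Li : L ^+ (n %% k) <= (L + 1) ^+ k.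
  apply: le_trans (ler_weXn2l _ (ltnW ik)); last by rewrite lerDr.
  by rewrite lerXn2r ?nnegrE ?addr_ge0 ?lerDl.
have uq : u (k * (n %/ k))%N <= `|M| * r ^+ (k * (n %/ k)).
  by rewrite exprM (le_trans (HN _ Nq)) // ler_wpM2r ?exprn_ge0 ?ler_norm // ltW.
rewrite {1}(divn_eq n k) mulnC; apply: le_trans (geom_growth_le L0 uL _ _) _.
apply: le_trans (ler_pM (exprn_ge0 _ L0) (u0 _) Li uq) _.
rewrite -!mulrA ler_wpM2l ?exprn_ge0 ?addr_ge0 // ler_wpM2l // [leRHS]mulrC.
rewrite ler_pdivlMr ?exprn_gt0 // -exprD ler_wiXn2l ?(ltW r0) //.
by rewrite {1}(divn_eq n k) [(_ * k)%N]mulnC leq_add2l ltnW.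
Qed.

End SuperexpDecay.

Lemma mulr_geom_eventually_lt (R : archiRealFieldType) (M c r : R) :
  0 < c -> 0 <= r -> r < 1 -> exists N, forall n, (N <= n)%N -> M * r ^+ n < c.
Proof.
move=> c0 r0 r1.
have geom0 : M * r ^+ n @[n --> \oo] --> 0.
  by rewrite -(mulr0 M); apply: cvgMr; apply: cvg_expr; rewrite ger0_norm.
by have [N _ HN] := cvgr_lt _ geom0 _ c0; exists N.
Qed.

Lemma superexp_decay_cst_le0 (R : archiRealFieldType) (c : R) :
  superexp_decay (fun=> c) -> c <= 0.
Proof.
move=> dc; rewrite leNgt; apply/negP => c0.
have half0 : 0 < 2^-1 :> R by rewrite invr_gt0.
have half1 : 2^-1 < 1 :> R by rewrite invf_lt1 ?ltr1n.
have [M [N HN]] := dc _ half0.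
have [N' HN'] := mulr_geom_eventually_lt M c0 (ltW half0) half1.
by have := HN' _ (leq_maxr N N'); rewrite ltNge HN ?leq_maxl.
Qed.

Lemma superexp_decayP (R : realType) (u : nat -> R) : (forall n, 0 <= u n) ->
  superexp_decay u <-> (fun n => powR (u n) n%:R^-1) @ \oo --> 0.
Proof.
move=> u0; split=> [du|root0].
- apply/cvgr0Pnorm_le => e e0.
  have half0 : 0 < 2^-1 :> R by rewrite invr_gt0.
  have half1 : 2^-1 < 1 :> R by rewrite invf_lt1 ?ltr1n.
  have [M [N HN]] := du (e / 2) (mulr_gt0 e0 half0).
  have [N' HN'] := mulr_geom_eventually_lt M ltr01 (ltW half0) half1.
  exists (maxn 1 (maxn N N')) => // n /=; rewrite !geq_max => /and3P[n0 Nn N'n].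
  have une : u n <= e ^+ n.
    rewrite (le_trans (HN n Nn)) // exprMn mulrCA.
    by rewrite ler_piMr ?exprn_ge0 ?(ltW e0) ?(ltW (HN' n N'n)).
  have n0' : n%:R != 0 :> R by rewrite pnatr_eq0 -lt0n.
  have -> : e = powR (e ^+ n) n%:R^-1.
    by rewrite -powR_mulrn ?(ltW e0) // -powRrM mulfV // powRr1 // ltW.
  by rewrite ger0_norm ?powR_ge0 // ge0_ler_powR ?nnegrE ?invr_ge0 ?exprn_ge0 ?(ltW e0).
- move=> r r0; have [N _ HN] := cvgr_lt _ root0 _ r0.
  exists 1, N.+1 => n Nn; rewrite mul1r.
  have n0 : n%:R != 0 :> R by rewrite pnatr_eq0 -lt0n (leq_trans _ Nn).
  rewrite -[u n](powRr1 (u0 n)) -(mulVf n0) powRrM powR_mulrn ?powR_ge0 //.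
  by rewrite lerXn2r ?nnegrE ?powR_ge0 ?(ltW r0) // (ltW (HN _ (ltnW Nn))).
Qed.

Section Defect.
Variable T : pzRingType.
Implicit Types a x z : T.

Definition gc_defect a x n := a ^+ n - x * a ^+ n.+1.

Lemma exprDS_cancel a x m j :
  x = a * x ^+ 2 -> a ^+ m * x ^+ (m + j).+1 = x ^+ j.+1.
Proof.
move=> xE; elim: m => [|m IHm]; first by rewrite mul1r.
by rewrite exprSr -mulrA addSn -addn2 addnC exprD [a * (_ * _)]mulrA -xE -exprS.
Qed.

Lemma exprS_cancel a x m : x = a * x ^+ 2 -> a ^+ m * x ^+ m.+1 = x.
Proof. by move=> xE; rewrite -[in m.+1](addn0 m) exprDS_cancel. Qed.

Lemma gc_defect_mulX a x z n :
  z = a * z ^+ 2 -> gc_defect a x n * z ^+ n.+1 = z - x * a * z.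
Proof.
by move=> zE; rewrite mulrBl -mulrA exprS_cancel // exprS -!mulrA exprS_cancel.
Qed.

Lemma gc_defectS a x n : gc_defect a x n.+1 = gc_defect a x n * a.
Proof. by rewrite /gc_defect mulrBl -mulrA -!exprSr. Qed.

Lemma gc_defect_root a y k m :
  gc_defect a (a ^+ k * y) (k.+1 * m + k) = a ^+ k * gc_defect (a ^+ k.+1) y m.
Proof.
rewrite /gc_defect mulrBr -!exprM mulrA -exprD.
by congr (a ^+ _ - _ * a ^+ _); rewrite ?mulnS addnC.
Qed.

End Defect.

Section GeneralizedCoreEP.
Variables (R : realType) (A : algType R[i]) (star : A -> A) (nrm : A -> R).
Hypothesis HA : banach_star_algebra star nrm.
Implicit Types a c u v w x y z : A.

Local Notation gcEP_inv := (is_gcEP_inv star nrm).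

Lemma is_gcEP_invP a x : gcEP_inv a x <->
  [/\ x = a * x ^+ 2, star (a * x) = a * x &
      superexp_decay (fun n => nrm (gc_defect a x n))].
Proof.
have d0 n : 0 <= nrm (gc_defect a x n) := nrm_ge0 HA _.
by split=> -[xE sE dx]; split=> //; apply/(superexp_decayP d0).
Qed.

Lemma nrm_mulX w v n : nrm (w * v ^+ n) <= nrm w * nrm v ^+ n.
Proof.
elim: n => [|n IHn]; first by rewrite !expr0 !mulr1.
rewrite !exprSr !mulrA (le_trans (nrm_submult HA _ _)) //.
by rewrite ler_wpM2r ?(nrm_ge0 HA).
Qed.

Lemma decay_factor_eq0 c u w v (d : nat -> A) :
  (forall n, c = u * d n * w * v ^+ n) -> superexp_decay (fun n => nrm (d n)) ->
  c = 0.
Proof.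
move=> cE dd; apply: (nrm_eq0 HA); apply/eqP; rewrite eq_le (nrm_ge0 HA) andbT.
have ge0 := nrm_ge0 HA; apply: superexp_decay_cst_le0.
apply: (superexp_decay_le _ (superexp_decayMl (mulr_ge0 (ge0 u) (ge0 w))
  (superexp_decayMgeom (ge0 v) dd))) => n.
rewrite (cE n) -mulrA (le_trans (nrm_submult HA _ _)) //.
by rewrite mulrACA ler_pM ?ge0 ?(nrm_submult HA) ?nrm_mulX.
Qed.

Lemma gcEP_inv_fix a x z : gcEP_inv a x -> z = a * z ^+ 2 -> x * a * z = z.
Proof.
move=> /is_gcEP_invP[_ _ dx] zE; apply/eqP; rewrite eq_sym -subr_eq0; apply/eqP.
apply: (decay_factor_eq0 (u := 1) (w := z) (v := z) _ dx) => n.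
by rewrite mul1r -[in RHS]mulrA -exprS gc_defect_mulX.
Qed.

Lemma gcEP_inv_uniq a x z : gcEP_inv a x -> gcEP_inv a z -> x = z.
Proof.
move=> gx gz; have [xE sx _] := gx; have [zE sz _] := gz.
have axz := gcEP_inv_fix gx zE; have zax := gcEP_inv_fix gz xE.
have ax_az : a * x = a * z.
  rewrite -sx; have -> : a * x = (a * z) * (a * x) by rewrite -!mulrA [z * _]mulrA zax.
  by rewrite (star_mul HA) sx sz -mulrA [x * _]mulrA axz.
by rewrite -zax -mulrA ax_az mulrA (gcEP_inv_fix gz zE).
Qed.

Lemma gc_defect_iter_decay a x j : gcEP_inv a x ->
  superexp_decay (fun m => nrm (a ^+ m - x ^+ j.+1 * a ^+ (m + j.+1))).
Proof.
move=> /is_gcEP_invP[_ _ dx]; elim: j => [|j IHj].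
  by apply: superexp_decay_le dx => m; rewrite addn1 expr1.
have dx_shift := (superexp_decay_shift _ j.+1).2 dx.
apply: superexp_decay_le (superexp_decayD IHj
  (superexp_decayMl (nrm_ge0 HA (x ^+ j.+1)) dx_shift)) => m /=.
have -> : a ^+ m - x ^+ j.+2 * a ^+ (m + j.+2) =
          (a ^+ m - x ^+ j.+1 * a ^+ (m + j.+1)) + x ^+ j.+1 * gc_defect a x (m + j.+1).
  by rewrite mulrBr mulrA -exprSr -addnS addrA subrK.
by rewrite (le_trans (nrm_triangle HA _ _)) // lerD // (nrm_submult HA).
Qed.

Lemma gcEP_invX a x k : (0 < k)%N -> gcEP_inv a x -> gcEP_inv (a ^+ k) (x ^+ k).
Proof.
case: k => // k _ gx; have [xE sx _] := gx.
have akxk : a ^+ k.+1 * x ^+ k.+1 = a * x by rewrite exprS -mulrA exprS_cancel.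
apply/is_gcEP_invP; split; first by rewrite -exprM mulnC mul2n -addnn addnS exprDS_cancel.
- by rewrite akxk.
apply: superexp_decay_le (superexp_decay_subseq (ltn0Sn k) (gc_defect_iter_decay k gx)).
by move=> n; rewrite /gc_defect -!exprM mulnS addnC.
Qed.

Lemma gcEP_inv_root a y k : (0 < k)%N -> gcEP_inv (a ^+ k) y ->
  gcEP_inv a (a ^+ k.-1 * y).
Proof.
case: k => // k _ /is_gcEP_invP[yE sy dy] /=; set b := a ^+ k.+1 in yE sy dy *.
have ax : a * (a ^+ k * y) = b * y by rewrite mulrA -exprS.
apply/is_gcEP_invP; split; [|by rewrite ax|].
- rewrite expr2 mulrA ax; apply/eqP; rewrite -subr_eq0; apply/eqP.
  (* a^k y - b y a^k y = b d_n(b, y) a^k y^(n+2), as b^(n+1) y^(n+2) = y. *)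
  apply: (decay_factor_eq0 (u := b) (w := a ^+ k * y ^+ 2) (v := y) _ dy) => n.
  have bk : b ^+ n.+1 * a ^+ k = a ^+ k * b ^+ n.+1.
    by rewrite /b -!exprM -!exprD addnC.
  have akyE : b ^+ n.+1 * (a ^+ k * y ^+ 2) * y ^+ n = a ^+ k * y.
    by rewrite mulrA bk -mulrA -exprD -mulrA addnC addn2 exprS_cancel.
  by rewrite -akyE /gc_defect mulrBr -exprS !mulrBl !mulrA.
- apply/(superexp_decay_shift _ k).
  apply: (superexp_decay_from_subseq (ltn0Sn k) (nrm_ge0 HA a)) => [n|n|].
  + exact: (nrm_ge0 HA _).
  + by rewrite addSn gc_defectS mulrC (nrm_submult HA).
  apply: superexp_decay_le (superexp_decayMl (nrm_ge0 HA (a ^+ k)) dy) => m.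
  by rewrite gc_defect_root (nrm_submult HA).
Qed.

End GeneralizedCoreEP.

Theorem lemma3p4 (R : realType) (A : algType R[i]) (star : A -> A) (nrm : A -> R)
  (HA : banach_star_algebra star nrm) (a : A) (k : nat) (hk : (1 <= k)%N) :
  (has_gcEP star nrm a <-> has_gcEP star nrm (a ^+ k)) /\
  (forall x y : A, is_gcEP_inv star nrm a x -> is_gcEP_inv star nrm (a ^+ k) y ->
     y = x ^+ k /\ x = a ^+ k.-1 * y).
Proof.
split.
  split=> -[x gx]; first by exists (x ^+ k); apply: gcEP_invX.
  by exists (a ^+ k.-1 * x); apply: gcEP_inv_root.
move=> x y gx gy; have yE : y = x ^+ k := gcEP_inv_uniq HA gy (gcEP_invX HA hk gx).
split=> //; case: k hk yE {gy} => // k _ ->; have [xE _ _] := gx.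
by rewrite exprS_cancel.
Qed.
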